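(* Fix $\epsilon > 0$, integers $T_0$ and $T > T_0 + (\frac{1}{2} + 2\epsilon) n \log(n)$. For each $T_0 \le t < T$ let $(i_t, j_t)$ be chosen independently and uniformly at random among all pairs $1 \le i_t < j_t \le n$. Define partitions $\mathcal{P}_t$ of $\{1,\dots,n\}$ for $t = T, T-1, \dots, T_0$ backward in time: $\mathcal{P}_T = \{\{1\},\{2\},\dots,\{n\}\}$, and for $T_0 \le t < T$, if $i_t$ and $j_t$ lie in the same block of $\mathcal{P}_{t+1}$ then $\mathcal{P}_t = \mathcal{P}_{t+1}$, otherwise $\mathcal{P}_t$ is obtained from $\mathcal{P}_{t+1}$ by merging the block containing $i_t$ with the block containing $j_t$. Then for all $n > N_0(\epsilon)$ sufficiently large, $$\mathbb{P}\big[\mathcal{P}_{T_0} = \{\{1,2,\dots,n\}\}\big] \ge 1 - 2n^{-\epsilon},$$ i.e. with probability at least $1 - 2n^{-\epsilon}$ the partition $\mathcal{P}_{T_0}$ consists of the single block $\{1,\dots,n\}$. *)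

From mathcomp Require Import all_boot.
From Stdlib Require Import Reals ZArith.

Set Implicit Arguments.
Unset Strict Implicit.
Unset Printing Implicit Defensive.

(* Points {1,...,n} are represented by 'I_n = {0,...,n-1}. *)

Definition Pair (n : nat) := {p : 'I_n * 'I_n | (nat_of_ord p.1 < nat_of_ord p.2)%nat}.

Definition partn (n : nat) := {set {set 'I_n}}.

Definition singletons (n : nat) : partn n := [set [set i] | i : 'I_n].

Definition merge_step (n : nat) (e : Pair n) (P : partn n) : partn n :=
  let i := (sval e).1 in
  let j := (sval e).2 in
  if pblock P i == pblock P j then P
  else ((P :\ pblock P i) :\ pblock P j) :|: [set pblock P i :|: pblock P j].

(* For a sequence s of m = T - T0 pairs, s k = (i_{T0+k}, j_{T0+k}),
   part_at s k is the partition P_{T0+k} (0 <= k <= m), computed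
   backward from P_T = singletons. *)
Definition part_at (n m : nat) (s : {ffun 'I_m -> Pair n}) (k : nat) : partn n :=
  foldr (@merge_step n) (singletons n) (drop k [seq s t | t <- enum 'I_m]).

Definition prob_one_block (n m : nat) : R :=
  INR #|[set s : {ffun 'I_m -> Pair n} | part_at s 0 == [set [set: 'I_n]]]|
  / INR #|{ffun 'I_m -> Pair n}|.

(** If [P_T0] is not the single block, the block of some point, or its
    complement, is a set [S] with [0 < |S| <= n/2] that no pair [(i_t, j_t)]
    crosses.  A fixed [k]-set is crossed by none of the [m = T - T0] pairs with
    probability [(1 - k(n-k)/C(n,2))^m <= n^(-(1+4eps) k(n-k)/n)], and there are
    [C(n,k)] such sets.  When [(1+4eps) k <= eps n], [C(n,k) <= n^k] leaves
    [n^(-3 eps k)]; otherwise [(1+4eps) k(n-k)/n >= (1+4eps) k/2 > eps n/2]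
    and [C(n,k) <= 2^n] leave at most [n^(-eps)/n] for large [n].  Summing over
    [k <= n/2] gives at most [2 n^(-eps)]. *)

From mathcomp Require Import all_boot.
From Stdlib Require Import Reals ZArith Lra Lia.
(* Importing [Reals] rebinds [^] on [nat] to [Nat.pow]; this restores [expn]. *)
From mathcomp Require Import ssrnat zify.

Set Implicit Arguments.
Unset Strict Implicit.
Unset Printing Implicit Defensive.

Section MergeBlocks.
Variables (T : finType) (P : {set {set T}}) (D B1 B2 : {set T}).
Hypotheses (partP : partition P D) (PB1 : B1 \in P) (PB2 : B2 \in P) (B12 : B1 != B2).

Let merged := P :\ B1 :\ B2 :|: [set B1 :|: B2].

Lemma partition_merge : partition merged D.
Proof.
have PB2' : B2 \in P :\ B1 by rewrite !inE eq_sym B12.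
have B12_neq0 : B1 :|: B2 != set0.
  by rewrite setU_eq0 negb_and (partition_neq0 partP PB1).
have B12_dis : [disjoint B1 :|: B2 & D :\: B1 :\: B2].
  by rewrite -setI_eq0; apply/eqP/setP => x; rewrite !inE; case: (x \in B1); case: (x \in B2).
have := partitionU1 (partitionD1 (partitionD1 partP PB1) PB2') B12_neq0 B12_dis.
have [/subsetP sB1 /subsetP sB2] := (partitionS partP PB1, partitionS partP PB2).
congr partition; first by rewrite /merged setUC.
apply/setP => x; rewrite !inE.
by case: (boolP (x \in B1)) => [/sB1|]; case: (boolP (x \in B2)) => [/sB2|] => //= ->.
Qed.

Lemma pblock_merge x : x \in D ->
  pblock merged x = if pblock P x \in [set B1; B2] then B1 :|: B2 else pblock P x.
Proof.
rewrite -(cover_partition partP) => xP.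
have tI := partition_trivIset partition_merge.
have xB := xP; rewrite -mem_pblock in xB.
case: ifP => [/set2P B | /negbT notB]; apply: (def_pblock tI).
- by rewrite !inE eqxx orbT.
- by rewrite inE; case: B => <-; rewrite xB ?orbT.
- by move: notB; rewrite !inE negb_or => /andP[-> ->]; rewrite pblock_mem.
- exact: xB.
Qed.

End MergeBlocks.

Lemma partition_set1 (T : finType) (P : {set {set T}}) (D : {set T}) :
  partition P D -> D \in P -> P = [set D].
Proof.
move=> partP PD; apply/setP => B; rewrite inE; apply/idP/eqP => [PB | ->] //.
have /set0Pn[x xB] := partition_neq0 partP PB.
have xD : x \in D by apply: (subsetP (partitionS partP PB)).
have tI := partition_trivIset partP.
by rewrite -(def_pblock tI PB xB) (def_pblock tI PD xD).
Qed.

Section Process.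
Variable n : nat.

Lemma partition_singletons : partition (singletons n) [set: 'I_n].
Proof.
have set0_notin : set0 \notin singletons n.
  by apply/imsetP => -[x _ /setP/(_ x)]; rewrite !inE eqxx.
apply/and3P; split => //.
- rewrite cover_imset; apply/eqP/setP => x.
  by rewrite inE; apply/bigcupP; exists x; rewrite ?inE.
- apply: (trivIimset _ set0_notin).1 => x y _ _ yx.
  by rewrite disjoints1 inE eq_sym.
Qed.

Lemma foldr_merge_step_spec (l : seq (Pair n)) :
  let Q := foldr (@merge_step n) (singletons n) l in
  partition Q [set: 'I_n] /\ {in l, forall e, pblock Q (sval e).1 = pblock Q (sval e).2}.
Proof.
elim: l => [|e l /= [partP joinP]]; first by split => //; exact: partition_singletons.
rewrite /merge_step; set P := foldr _ _ _.
set i := (sval e).1; set j := (sval e).2.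
case: eqP => [same_block | /eqP ij].
  by split => // e'; rewrite inE => /predU1P[-> | /joinP].
have covP x : x \in cover P by rewrite (cover_partition partP) inE.
have [PBi PBj] := (pblock_mem (covP i), pblock_mem (covP j)).
have merge x := pblock_merge partP PBi PBj ij (in_setT x).
split; first exact: partition_merge.
move=> e'; rewrite inE => /predU1P[-> | /joinP same]; rewrite !merge.
- by rewrite !inE !eqxx orbT.
- by rewrite same.
Qed.

Definition noncrossing (S : {set 'I_n}) : {set Pair n} :=
  [set p | ((sval p).1 \in S) == ((sval p).2 \in S)].

Lemma noncrossingC S : noncrossing (~: S) = noncrossing S.
Proof. by apply/setP => p; rewrite !inE; case: (_ \in S); case: (_ \in S). Qed.

Lemma exists_small_cut (x0 : 'I_n) (l : seq (Pair n)) :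
  foldr (@merge_step n) (singletons n) l != [set [set: 'I_n]] ->
  exists2 S : {set 'I_n}, (0 < #|S|) && (2 * #|S| <= n) & {subset l <= noncrossing S}.
Proof.
have [partQ joinQ] := foldr_merge_step_spec l; set Q := foldr _ _ _ => Q_ne1.
have tI := partition_trivIset partQ.
have covQ x : x \in cover Q by rewrite (cover_partition partQ) inE.
set S := pblock Q x0.
have memS y : (y \in S) = (pblock Q y == S) by rewrite eq_sym eq_pblock.
have cutS : {subset l <= noncrossing S}.
  by move=> e /joinQ same; rewrite inE !memS same.
have S_gt0 : 0 < #|S| by apply/card_gt0P; exists x0; rewrite mem_pblock.
have S_ltn : #|S| < n.
  rewrite -[X in _ < X]card_ord -cardsT; apply/proper_card; rewrite properT.
  apply: contra Q_ne1 => /eqP ST; apply/eqP/partition_set1 => //.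
  by rewrite -ST pblock_mem.
have [S_small | S_large] := leqP (2 * #|S|) n; first by exists S; rewrite ?S_gt0.
have cardSC : #|~: S| = n - #|S| by rewrite cardsCs setCK card_ord.
by exists (~: S); rewrite ?noncrossingC // cardSC; apply/andP; split; lia.
Qed.
End Process.

Lemma leq_card_bigcup (I T : finType) (p : pred I) (F : I -> {set T}) :
  #|\bigcup_(i | p i) F i| <= \sum_(i | p i) #|F i|.
Proof.
elim/big_rec2: _ => [|i A s _ IH]; first by rewrite cards0.
by apply: leq_trans (leq_card_setU _ _) _; rewrite leq_add2l.
Qed.

Lemma sum_set_card (T : finType) (p : pred nat) (F : nat -> nat) :
  \sum_(S : {set T} | p #|S|) F #|S| = \sum_(k < #|T|.+1 | p k) 'C(#|T|, k) * F k.
Proof.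
pose ordcard (S : {set T}) : 'I_#|T|.+1 := inord #|S|.
have cardK S : ordcard S = #|S| :> nat by rewrite inordK // ltnS max_card.
rewrite (partition_big ordcard (fun k => p k)) /=; last by move=> S; rewrite cardK.
apply: eq_bigr => k pk; rewrite -card_draws -sum_nat_const.
apply: eq_big => [S | S /andP[_ /eqP <-]]; last by rewrite cardK.
rewrite inE -val_eqE /= cardK.
by case: eqP => [->|]; rewrite ?pk ?andbF.
Qed.

Section Counting.
Variable n : nat.

Lemma card_Pair : 2 * #|{: Pair n}| <= n * n.
Proof.
pose A := [set u : 'I_n * 'I_n | u.1 < u.2].
have cardA : #|{: Pair n}| = #|A| by rewrite card_sig cardsE.
have flip_inj : injective (fun u : 'I_n * 'I_n => (u.2, u.1)) by move=> [? ?] [? ?] [-> ->].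
have le_AC : #|A| <= #|~: A|.
  rewrite -(card_imset A flip_inj); apply: subset_leq_card.
  by apply/subsetP => _ /imsetP[u + ->]; rewrite !inE -leqNgt => /ltnW.
have := cardsC A; rewrite card_prod card_ord => <-.
by rewrite cardA mul2n -addnn leq_add2l.
Qed.

Lemma card_noncrossing (S : {set 'I_n}) :
  #|noncrossing S| + #|S| * (n - #|S|) <= #|{: Pair n}|.
Proof.
pose orient (p : Pair n) := if (sval p).1 \in S then sval p else ((sval p).2, (sval p).1).
have cut_sub : setX S (~: S) \subset orient @: ~: noncrossing S.
  apply/subsetP => -[x y]; rewrite !inE /= => /andP[xS yS].
  have [xy | yx | /val_inj xy] := ltngtP x y; last by move: yS; rewrite -xy xS.
  - by apply/imsetP; exists (exist _ (x, y) xy); rewrite ?inE /orient /= ?xS // (negbTE yS).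
  - by apply/imsetP; exists (exist _ (y, x) yx); rewrite ?inE /orient /= ?(negbTE yS) // xS.
have := leq_trans (subset_leq_card cut_sub) (leq_imset_card _ _).
rewrite cardsX [#|~: S|]cardsCs setCK card_ord -(leq_add2l #|noncrossing S|) => le.
by apply: leq_trans le _; rewrite cardsC.
Qed.
End Counting.

Lemma card_not_one_block_le n m (x0 : 'I_n) :
  #|~: [set s : {ffun 'I_m -> Pair n} | part_at s 0 == [set [set: 'I_n]]]| <=
  \sum_(k < n.+1 | (0 < k) && (2 * k <= n)) 'C(n, k) * (#|{: Pair n}| - k * (n - k)) ^ m.
Proof.
pose small_cut (S : {set 'I_n}) := (0 < #|S|) && (2 * #|S| <= n).
set bad := ~: _.
have bad_sub : bad \subset \bigcup_(S | small_cut S) [set s in ffun_on (noncrossing S)].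
  apply/subsetP => s; rewrite !inE /part_at drop0 => /(exists_small_cut x0)[S cutS ncS].
  apply/bigcupP; exists S => //; rewrite inE; apply/ffun_onP => t.
  by apply: ncS; apply: map_f; rewrite mem_enum.
apply: leq_trans (subset_leq_card bad_sub) _; apply: leq_trans (leq_card_bigcup _ _) _.
have := sum_set_card 'I_n (fun k => (0 < k) && (2 * k <= n))
  (fun k => (#|{: Pair n}| - k * (n - k)) ^ m); rewrite card_ord => <-.
apply: leq_sum => S _; rewrite cardsE card_ffun_on card_ord.
have [-> | m_gt0] := posnP m; first by rewrite !expn0.
have le := card_noncrossing S.
by rewrite leq_exp2r // leq_subRL ?(leq_trans (leq_addl _ _) le) // addnC.
Qed.

Lemma bin_le_expn n k : 'C(n, k) <= n ^ k.
Proof.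
apply: leq_trans (_ : n ^_ k <= _); first by rewrite -bin_ffact leq_pmulr ?fact_gt0.
rewrite ffact_prod -[k in n ^ k]card_ord -prod_nat_const.
by apply: leq_prod => i _; apply: leq_subr.
Qed.

Lemma bin_le_exp2 n k : 'C(n, k) <= 2 ^ n.
Proof.
rewrite -[n in 'C(n, _)]card_ord -card_draws -[n in 2 ^ n]card_ord -cardsT -card_powerset.
by apply: subset_leq_card; apply/subsetP => A _; rewrite powersetE subsetT.
Qed.

Local Open Scope R_scope.

Lemma exp_le_exp x y : x <= y -> exp x <= exp y.
Proof. by move=> [/exp_increasing/Rlt_le | ->] //; apply: Rle_refl. Qed.

Lemma exp_pow x k : exp x ^ k = exp (INR k * x).
Proof.
elim: k => [|k IH]; first by rewrite /= Rmult_0_l exp_0.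
by rewrite -tech_pow_Rmult IH S_INR -exp_plus; f_equal; ring.
Qed.

Lemma INR_expn a k : INR (a ^ k)%N = INR a ^ k.
Proof. by elim: k => [|k IH] //; rewrite expnS mult_INR IH. Qed.

Lemma INR_leq a b : (a <= b)%N -> INR a <= INR b.
Proof. by move/leP; apply: le_INR. Qed.

Lemma pow_le_exp (c K P : R) (m : nat) :
  0 <= c -> 0 < P -> c + K <= P -> c ^ m <= P ^ m * exp (- (INR m * K / P)).
Proof.
move=> c_ge0 P_gt0 cKP.
have c_le : c <= P * exp (- (K / P)).
  have := exp_ineq1_le (- (K / P)).
  have -> : c = P * (c / P) by field; lra.
  have : c / P <= 1 + - (K / P) by apply: (Rmult_le_reg_r P) => //; field_simplify; lra.
  by move=> le1 le2; apply: Rmult_le_compat_l; lra.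
apply: Rle_trans (pow_incr _ _ m (conj c_ge0 c_le)) _.
by rewrite Rpow_mult_distr exp_pow; apply: Req_le; do 2 f_equal; field; lra.
Qed.

Lemma sum_f_R0_geometric r c K : 0 <= r -> 2 * r <= 1 ->
  sum_f_R0 (fun k => if (0 < k)%N then r ^ k + c else 0) K <= 2 * r + INR K * c.
Proof.
move=> r_ge0 r_le; suff : sum_f_R0 (fun k => if (0 < k)%N then r ^ k + c else 0) K
    <= 2 * r - 2 * r ^ K.+1 + INR K * c.
  by have := pow_le r K.+1 r_ge0; lra.
elim: K => [|K IH]; first by rewrite /=; lra.
rewrite tech5 S_INR /=.
have := pow_le r K r_ge0; have := pow_le r K.+1 r_ge0; simpl in *; nra.
Qed.

Lemma INR_sum_le (f : nat -> nat) (p : pred nat) (G : nat -> R) K :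
  (forall k, (k <= K)%N -> p k -> INR (f k) <= G k) -> (forall k, (k <= K)%N -> 0 <= G k) ->
  INR (\sum_(k < K.+1 | p k) f k) <= sum_f_R0 G K.
Proof.
move=> f_le G_ge0; rewrite big_mkcond.
elim: K f_le G_ge0 => [|K IH] f_le G_ge0.
  rewrite big_ord_recr big_ord0 plus_INR /= Rplus_0_l.
  by case: ifP => [p0 | _]; [exact: f_le | exact: G_ge0].
rewrite big_ord_recr plus_INR tech5 /=; apply: Rplus_le_compat.
  by apply: IH => k k_le; [apply: f_le; apply: leqW | apply: G_ge0; apply: leqW].
by case: ifP => [pK | _]; [exact: f_le | exact: G_ge0].
Qed.

Section TailBound.
Variables (eps : R) (n m : nat).
Let L := ln (INR n).
Hypotheses (eps_gt0 : 0 < eps) (n_ge2 : (2 <= n)%N) (eps_L : 4 * ln 2 <= eps * L)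
  (n_large : 4 * (eps + 1) <= eps * INR n) (m_large : (1 + 4 * eps) * INR n * L <= 2 * INR m).

Let n_ge2R : 2 <= INR n := INR_leq n_ge2.
Let L_gt0 : 0 < L.
Proof. by rewrite /L -ln_1; apply: ln_increasing; lra. Qed.

(* [exp (- decay k)] bounds the probability that none of the [m] pairs crosses a
   fixed [k]-set, since [2 m >= (1+4eps) n ln n] and [2 #|Pair n| <= n^2]. *)
Let decay (k : nat) := (1 + 4 * eps) * (INR k * (INR n - INR k)) * L / INR n.

Lemma decay_small k : (1 + 4 * eps) * INR k <= eps * INR n ->
  INR (n ^ k) * exp (- decay k) <= exp (- (3 * eps * L)) ^ k.
Proof.
move=> small; rewrite INR_expn -(exp_ln (INR n)); last lra.
rewrite !exp_pow -exp_plus; apply: exp_le_exp; rewrite -/L /decay.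
have -> : INR k * L + - ((1 + 4 * eps) * (INR k * (INR n - INR k)) * L / INR n)
    = INR k * - (3 * eps * L) + INR k * L * ((1 + 4 * eps) * INR k - eps * INR n) / INR n.
  by field; lra.
have : INR k * L * ((1 + 4 * eps) * INR k - eps * INR n) / INR n <= 0.
  have kL_ge0 : 0 <= INR k * L by have := pos_INR k; nra.
  have inv_n : 0 < / INR n by apply: Rinv_0_lt_compat; lra.
  have : INR k * L * ((1 + 4 * eps) * INR k - eps * INR n) <= 0 by nra.
  rewrite /Rdiv; nra.
lra.
Qed.

Lemma decay_large k : (2 * k <= n)%N -> eps * INR n <= (1 + 4 * eps) * INR k ->
  INR (2 ^ n) * exp (- decay k) <= exp (- (eps * L)) / INR n.
Proof.
move=> k_half large.
have k2 : 2 * INR k <= INR n by have := INR_leq k_half; rewrite mult_INR.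
have decay_ge : eps * INR n * L / 2 <= decay k.
  have -> : decay k = (1 + 4 * eps) * INR k * L / 2
      + (1 + 4 * eps) * INR k * L * (INR n - 2 * INR k) / (2 * INR n).
    by rewrite /decay; field; lra.
  have : 0 <= (1 + 4 * eps) * INR k * L * (INR n - 2 * INR k) / (2 * INR n).
    have := pos_INR k => k_ge0.
    apply: Rmult_le_pos; last by apply/Rlt_le/Rinv_0_lt_compat; lra.
    by apply: Rmult_le_pos; [apply: Rmult_le_pos; [apply: Rmult_le_pos|] |]; lra.
  by have := Rmult_le_compat_r (L / 2) _ _ (ltac:(lra)) large; lra.
rewrite INR_expn (_ : INR 2 = exp (ln 2)) ?exp_pow; last by rewrite exp_ln /=; lra.
rewrite -{2}(exp_ln (INR n)) /Rdiv -?exp_Ropp -?exp_plus -/L; last lra.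
apply: exp_le_exp.
have : INR n * (4 * ln 2) <= INR n * (eps * L) by apply: Rmult_le_compat_l; lra.
have : (4 * (eps + 1)) * L <= (eps * INR n) * L by apply: Rmult_le_compat_r; lra.
simpl; lra.
Qed.

Lemma binomial_decay_le k : (2 * k <= n)%N ->
  INR 'C(n, k) * exp (- decay k) <= exp (- (3 * eps * L)) ^ k + exp (- (eps * L)) / INR n.
Proof.
move=> k_half.
have r_ge0 : 0 <= exp (- (3 * eps * L)) ^ k by apply/pow_le/Rlt_le/exp_pos.
have c_ge0 : 0 <= exp (- (eps * L)) / INR n.
  by apply/Rlt_le/Rdiv_lt_0_compat; [apply: exp_pos | lra].
have e_ge0 := Rlt_le _ _ (exp_pos (- decay k)).
have [small | large] := Rle_lt_dec ((1 + 4 * eps) * INR k) (eps * INR n).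
- have := Rmult_le_compat_r _ _ _ e_ge0 (INR_leq (bin_le_expn n k)).
  by have := decay_small small; lra.
- have := Rmult_le_compat_r _ _ _ e_ge0 (INR_leq (bin_le_exp2 n k)).
  by have := decay_large k_half (Rlt_le _ _ large); lra.
Qed.

Let m_gt0 : (0 < m)%N.
Proof.
apply/ltP/INR_lt; rewrite /=.
have : 0 < (1 + 4 * eps) * INR n * L by apply: Rmult_lt_0_compat; nra.
lra.
Qed.

Section PairCount.
Variable P : nat.
Hypotheses (P_gt0 : (0 < P)%N) (P_le : (2 * P <= n * n)%N).

Lemma cut_term_le k : (2 * k <= n)%N ->
  INR ('C(n, k) * (P - k * (n - k)) ^ m) <=
  INR (P ^ m) * (exp (- (3 * eps * L)) ^ k + exp (- (eps * L)) / INR n).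
Proof.
move=> k_half.
have PR : 0 < INR P by apply/lt_0_INR/ltP.
have bd := binomial_decay_le k_half.
have C_ge0 := pos_INR 'C(n, k).
have [K_le | K_gt] := leqP (k * (n - k)) P; last first.
  rewrite (eqP (ltnW K_gt) : (P - k * (n - k) = 0)%N) exp0n // muln0 /=.
  apply: Rmult_le_pos; first by rewrite INR_expn; apply: pow_le; lra.
  by apply: Rle_trans bd; apply: Rmult_le_pos => //; apply/Rlt_le/exp_pos.
have k_le : (k <= n)%N by apply: leq_trans k_half; apply: leq_pmull.
rewrite mult_INR !INR_expn minus_INR ?mult_INR ?minus_INR; try exact/leP.
set K := INR k * (INR n - INR k).
have K_ge0 : 0 <= K by rewrite /K; have := INR_leq k_le; have := pos_INR k; nra.
have rate : (1 + 4 * eps) * L / INR n <= INR m / INR P.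
  apply: (Rmult_le_reg_r (INR n * INR P)); first nra.
  have PnR : 2 * INR P <= INR n * INR n by have := INR_leq P_le; rewrite !mult_INR.
  have -> : (1 + 4 * eps) * L / INR n * (INR n * INR P) = (1 + 4 * eps) * L * INR P.
    by field; lra.
  have -> : INR m / INR P * (INR n * INR P) = INR m * INR n by field; lra.
  have aL_ge0 : 0 <= (1 + 4 * eps) * L by nra.
  have := Rmult_le_compat_l _ _ _ aL_ge0 PnR.
  have := Rmult_le_compat_l _ _ _ (pos_INR n) m_large.
  lra.
have decay_le : decay k <= INR m * K / INR P.
  rewrite /decay -/K.
  have -> : (1 + 4 * eps) * K * L / INR n = K * ((1 + 4 * eps) * L / INR n) by field; lra.
  have -> : INR m * K / INR P = K * (INR m / INR P) by field; lra.
  exact: Rmult_le_compat_l.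
have KP : K <= INR P by have := INR_leq K_le; rewrite mult_INR minus_INR //; apply/leP.
have Pm_ge0 : 0 <= INR P ^ m by apply: pow_le; lra.
have decay_bd : exp (- (INR m * K / INR P)) <= exp (- decay k) by apply: exp_le_exp; lra.
have := @pow_le_exp (INR P - K) K (INR P) m (ltac:(lra)) PR (ltac:(lra)).
move/(Rmult_le_compat_l _ _ _ C_ge0)/Rle_trans; apply.
rewrite -Rmult_assoc (Rmult_comm (INR 'C(n, k))) Rmult_assoc.
apply: Rmult_le_compat_l => //; apply: Rle_trans bd.
by apply: Rmult_le_compat_l.
Qed.

Lemma sum_cut_terms_le :
  INR (\sum_(k < n.+1 | (0 < k) && (2 * k <= n)) 'C(n, k) * (P - k * (n - k)) ^ m)%N <=
  INR (P ^ m) * (2 * exp (- (eps * L))).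
Proof.
set r := exp (- (3 * eps * L)); set c := exp (- (eps * L)) / INR n.
have r_ge0 : 0 <= r by apply/Rlt_le/exp_pos.
have c_ge0 : 0 <= c by apply/Rlt_le/Rdiv_lt_0_compat; [apply: exp_pos | lra].
have Pm_ge0 : 0 <= INR (P ^ m) by apply: pos_INR.
have two_r : 2 * r <= exp (- (eps * L)).
  have -> : exp (- (eps * L)) = r * exp (2 * eps * L) by rewrite /r -exp_plus; f_equal; ring.
  have := exp_ineq1_le (2 * eps * L); have := ln_lt_2; nra.
have exp_le1 : exp (- (eps * L)) <= 1 by rewrite -exp_0; apply: exp_le_exp; nra.
apply: Rle_trans (@INR_sum_le (fun k => 'C(n, k) * (P - k * (n - k)) ^ m)%N
  (fun k => (0 < k) && (2 * k <= n))%N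
  (fun k => (if (0 < k)%N then r ^ k + c else 0) * INR (P ^ m)) n _ _) _.
- move=> k _ /andP[k_gt0 k_half]; rewrite k_gt0 Rmult_comm; exact: cut_term_le.
- move=> k _; apply: Rmult_le_pos => //; case: ifP => _; last lra.
  by have := pow_le r k r_ge0; lra.
rewrite -scal_sum; apply: Rmult_le_compat_l => //.
apply: Rle_trans (sum_f_R0_geometric c n r_ge0 _) _; first lra.
have -> : INR n * c = exp (- (eps * L)) by rewrite /c; field; lra.
lra.
Qed.
End PairCount.

Lemma prob_one_block_ge : prob_one_block n m >= 1 - 2 * exp (- (eps * L)).
Proof.
have n_gt0 : (0 < n)%N by apply: leq_trans n_ge2.
pose x0 : 'I_n := Ordinal n_gt0.
pose p0 : Pair n := exist _ (Ordinal n_gt0, Ordinal n_ge2) (ltnSn 0).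
have P_gt0 : (0 < #|{: Pair n}|)%N by apply/card_gt0P; exists p0.
have D_gt0 : 0 < INR (#|{: Pair n}| ^ m) by rewrite INR_expn; apply/pow_lt/lt_0_INR/ltP.
pose good := [set s : {ffun 'I_m -> Pair n} | part_at s 0 == [set [set: 'I_n]]].
have split : INR #|good| + INR #|~: good| = INR (#|{: Pair n}| ^ m).
  by have := f_equal INR (cardsC good); rewrite plus_INR card_ffun card_ord.
have bad_le := Rle_trans _ _ _ (INR_leq (card_not_one_block_le m x0))
  (sum_cut_terms_le P_gt0 (card_Pair n)).
rewrite -/good in bad_le.
rewrite /prob_one_block -/good.
rewrite (_ : #|{ffun 'I_m -> Pair n}| = #|{: Pair n}| ^ m)%N; last by rewrite card_ffun card_ord.
apply: Rle_ge; apply: (Rmult_le_reg_r _ _ _ D_gt0); rewrite /Rdiv Rmult_assoc Rinv_l; lra.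
Qed.
End TailBound.

Lemma large_n_conditions (eps : R) : 0 < eps ->
  exists N0 : nat, forall n : nat, (N0 < n)%N ->
    [/\ (2 <= n)%N, 4 * ln 2 <= eps * ln (INR n) & 4 * (eps + 1) <= eps * INR n].
Proof.
move=> eps_gt0.
have [N0 N0_gt] := INR_unbounded (exp (4 * ln 2 / eps) + 4 * (eps + 1) / eps + 2).
exists N0 => n /ltP/lt_INR n_gt.
have exp_gt0 := exp_pos (4 * ln 2 / eps).
have ratio_ge0 : 0 <= 4 * (eps + 1) / eps by apply/Rlt_le/Rdiv_lt_0_compat; lra.
split.
- by apply/leP/INR_le; rewrite /=; lra.
- have : 4 * ln 2 / eps <= ln (INR n).
    by rewrite -[X in X <= _]ln_exp; apply/Rlt_le/ln_increasing; lra.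
  move/(Rmult_le_compat_l _ _ _ (Rlt_le _ _ eps_gt0)).
  by rewrite (_ : eps * (4 * ln 2 / eps) = 4 * ln 2) //; field; lra.
- have : 4 * (eps + 1) / eps <= INR n by lra.
  move/(Rmult_le_compat_l _ _ _ (Rlt_le _ _ eps_gt0)).
  by rewrite (_ : eps * (4 * (eps + 1) / eps) = 4 * (eps + 1)) //; field; lra.
Qed.

Theorem lemma4p3 (eps : R) (Heps : (0 < eps)%R) :
  exists N0 : nat, forall (n : nat) (T0 T : Z),
    (N0 < n)%nat ->
    (IZR T > IZR T0 + (1/2 + 2 * eps)%R * INR n * ln (INR n))%R ->
    (prob_one_block n (Z.to_nat (T - T0)) >= 1 - 2 * Rpower (INR n) (- eps)%R)%R.
Proof.
have [N0 large] := large_n_conditions Heps.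
exists N0 => n T0 T /large[n_ge2 eps_L n_large] T_gt.
have L_gt0 : 0 < ln (INR n).
  by rewrite -ln_1; apply: ln_increasing; have := INR_leq n_ge2; rewrite /=; lra.
have nL_ge0 : 0 <= (1/2 + 2 * eps) * INR n * ln (INR n).
  by apply: Rmult_le_pos; [apply: Rmult_le_pos; [lra | apply: pos_INR] | lra].
have TT0 : (0 <= T - T0)%Z by apply: le_IZR; rewrite minus_IZR; lra.
have m_large : (1 + 4 * eps) * INR n * ln (INR n) <= 2 * INR (Z.to_nat (T - T0)).
  by rewrite [INR (Z.to_nat _)]INR_IZR_INZ Z2Nat.id // minus_IZR; lra.
rewrite /Rpower (_ : - eps * ln (INR n) = - (eps * ln (INR n))); last ring.
exact: prob_one_block_ge.
Qed.
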